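(* Let $B,C^T\in\mathbb{R}^{n\times m}$ and assume $\operatorname{rank}B=r$. (a) There exists an invertible $T\in\mathbb{R}^{n\times n}$ with $(TB)^T=CT^{-1}$ if and only if $\operatorname{Ker}C^T=\operatorname{Ker}B$, $\operatorname{rank}(CB)=r$ and $CB$ is symmetric positive semidefinite; equivalently, if and only if there exists an invertible (which can be taken orthogonal) $V\in\mathbb{R}^{m\times m}$ such that $BV=[B_1\;\;0]$, $C^TV=[C_1^T\;\;0]$ with $B_1,C_1^T\in\mathbb{R}^{n\times r}$ of full column rank and $C_1B_1=YY^T$ symmetric positive definite for some invertible $Y\in\mathbb{R}^{r\times r}$. (b) Let $N_B\in\mathbb{R}^{n\times(n-r)}$ have columns forming a basis of $\operatorname{Ker}B^T$. If the conditions in (a) hold, with $V,B_1,C_1,Y$ as there, then every invertible $T$ with $(TB)^T=CT^{-1}$ has the form $T=U T_Z T_0$, where $$T_0=\begin{bmatrix}N_B^T\\ Y^{-1}C_1\end{bmatrix},\qquad T_Z=\begin{bmatrix}Z&0\\0&I\end{bmatrix},$$ with $U\in\mathbb{R}^{n\times n}$ an arbitrary real orthogonal matrix and $Z\in\mathbb{R}^{(n-r)\times(n-r)}$ an arbitrary nonsingular matrix. *)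

(* real matrices over an abstract real closed field R
   (the paper works over the reals; every realType is an rcfType). *)
From HB Require Import structures.
From mathcomp Require Import all_boot all_order all_algebra.
Set Implicit Arguments. Unset Strict Implicit. Unset Printing Implicit Defensive.
Import Order.TTheory GRing.Theory Num.Theory.
Local Open Scope ring_scope.

Section Defs.
Variable R : rcfType.

Definition orthogonal_mx n (U : 'M[R]_n) : Prop := U *m U^T = 1%:M.

Definition symmetric_mx n (A : 'M[R]_n) : Prop := A^T = A.

Definition spsd_mx n (A : 'M[R]_n) : Prop :=
  symmetric_mx A /\ forall x : 'cV[R]_n, 0 <= (x^T *m A *m x) 0 0.

Definition spd_mx n (A : 'M[R]_n) : Prop :=
  symmetric_mx A /\ forall x : 'cV[R]_n, x != 0 -> 0 < (x^T *m A *m x) 0 0.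

Definition same_kernel p q m (A1 : 'M[R]_(p, m)) (A2 : 'M[R]_(q, m)) : Prop :=
  forall x : 'cV[R]_m, A1 *m x = 0 <-> A2 *m x = 0.

Definition cols_basis_of_ker p n k (N : 'M[R]_(n, k)) (A : 'M[R]_(p, n)) : Prop :=
  \rank N = k /\
  forall x : 'cV[R]_n, A *m x = 0 <-> exists y : 'cV[R]_k, x = N *m y.

End Defs.

From HB Require Import structures.
From mathcomp Require Import all_boot all_order all_algebra.
From mathcomp Require Import zify ring lra.
Import Order.TTheory GRing.Theory Num.Theory.
Local Open Scope ring_scope.

(* [(T B)^T = C T^-1] says that [C = B^T G] for the Gram matrix [G = T^T T], and every
   symmetric positive definite [G] is such a Gram matrix (Cholesky).  Hence [C B] is the
   Gram matrix of [T B], which gives the conditions of (a).  Conversely, an orthonormal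
   basis adapted to [Ker B] compresses [B] and [C^T] to [[B1 0]] and [[C1^T 0]] with
   [C1 B1] positive definite, and then [C = B^T G] reduces to [B1^T G = C1].  Since
   [B1^T T0^T = [0 Y]], every [G = T0^T diag(W, I) T0] solves it; conversely, for a
   solution [T], congruence by [T0] turns [T^-1 T^-T] into [diag(W, I)] with [W]
   positive definite, and writing [W = Y' Y'^T], [Z = Y'^-1], the matrix
   [T_Z T0 T^-1] is orthogonal. *)

Section Kernels.
Set Implicit Arguments. Unset Strict Implicit.
Variable F : fieldType.

Lemma mulmx_cV_eq0 p q (M : 'M[F]_(p, q)) :
  (forall y : 'cV_q, M *m y = 0) -> M = 0.
Proof.
move=> M0; apply/matrixP=> i j; have /matrixP/(_ i 0) := M0 (delta_mx j 0).
by rewrite -colE !mxE.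
Qed.

Lemma mulmx_unit_eq0 p q (A : 'M[F]_p) (X : 'M[F]_(p, q)) :
  A \in unitmx -> A *m X = 0 -> X = 0.
Proof. by move=> uA AX0; rewrite -(mulKmx uA X) AX0 mulmx0. Qed.

Lemma mulmx_eq0_sub_kermx p q (A : 'M[F]_(p, q)) (x : 'cV_q) :
  A *m x = 0 <-> (x^T <= kermx A^T)%MS.
Proof.
split=> [Ax0 | /sub_kermxP xA0]; first by apply/sub_kermxP; rewrite -trmx_mul Ax0 trmx0.
by apply: trmx_inj; rewrite trmx_mul xA0 trmx0.
Qed.

Lemma ker_subP p1 p2 q (A1 : 'M[F]_(p1, q)) (A2 : 'M[F]_(p2, q)) :
  (forall x : 'cV_q, A1 *m x = 0 -> A2 *m x = 0) <-> (kermx A1^T <= kermx A2^T)%MS.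
Proof.
split=> [sub12 | sK x /mulmx_eq0_sub_kermx x1].
  apply/row_subP => i; have := (mulmx_eq0_sub_kermx A2 (row i (kermx A1^T))^T).1.
  rewrite trmxK; apply; apply: sub12; apply/mulmx_eq0_sub_kermx.
  by rewrite trmxK row_sub.
by apply/mulmx_eq0_sub_kermx; apply: submx_trans sK.
Qed.

Lemma ker_sub_mxrank p1 p2 q (A1 : 'M[F]_(p1, q)) (A2 : 'M[F]_(p2, q)) :
  (forall x : 'cV_q, A1 *m x = 0 -> A2 *m x = 0) -> (\rank A2 <= \rank A1)%N.
Proof.
move=> /ker_subP /mxrankS; rewrite !mxrank_ker !mxrank_tr.
by have := rank_leq_col A1; have := rank_leq_col A2; lia.
Qed.

Lemma same_kernel_mxrank p1 p2 q (A1 : 'M[F]_(p1, q)) (A2 : 'M[F]_(p2, q)) :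
  (forall x : 'cV_q, A1 *m x = 0 <-> A2 *m x = 0) -> \rank A1 = \rank A2.
Proof.
by move=> eqK; apply/eqP; rewrite eqn_leq !ker_sub_mxrank // => x /eqK.
Qed.

Lemma ker_sub_eq_mxrank p1 p2 q (A1 : 'M[F]_(p1, q)) (A2 : 'M[F]_(p2, q)) :
  (forall x : 'cV_q, A1 *m x = 0 -> A2 *m x = 0) -> \rank A1 = \rank A2 ->
  forall x : 'cV_q, A2 *m x = 0 -> A1 *m x = 0.
Proof.
move=> /ker_subP sK rk; apply/ker_subP.
have /andP[//] : (kermx A1^T == kermx A2^T)%MS.
by rewrite -(mxrank_leqif_eq sK) !mxrank_ker !mxrank_tr rk.
Qed.

Lemma full_col_rankP p q (A : 'M[F]_(p, q)) :
  (forall x : 'cV_q, A *m x = 0 -> x = 0) <-> \rank A = q.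
Proof.
have ker1 (x : 'cV_q) : 1%:M *m x = 0 <-> x = 0 by rewrite mul1mx.
split=> [injA | rkA x Ax0].
  rewrite -[RHS](mxrank1 F); apply: same_kernel_mxrank => x; rewrite ker1.
  by split=> [/injA | ->]; rewrite ?mulmx0.
apply/ker1; apply: (ker_sub_eq_mxrank _ _ Ax0) => [y|]; last by rewrite mxrank1.
by rewrite mul1mx => ->; rewrite mulmx0.
Qed.

End Kernels.

Section RealMatrices.
Set Implicit Arguments. Unset Strict Implicit.
Variable R : rcfType.

Lemma trmx_mul_self_ge0 p (x : 'cV[R]_p) : 0 <= (x^T *m x) 0 0.
Proof. by rewrite mxE; apply: sumr_ge0 => i _; rewrite mxE -expr2 sqr_ge0. Qed.

Lemma trmx_mul_self_eq0 p (x : 'cV[R]_p) : (x^T *m x) 0 0 = 0 -> x = 0.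
Proof.
rewrite mxE => /eqP; rewrite psumr_eq0 => [/allP x0|i _]; last first.
  by rewrite mxE -expr2 sqr_ge0.
apply/matrixP => i j; rewrite (ord1 j) mxE.
by have /implyP/(_ isT) := x0 i (mem_index_enum i); rewrite mxE mulf_eq0 orbb => /eqP.
Qed.

Lemma same_kernel_mulTmx p q (M : 'M[R]_(p, q)) : same_kernel (M^T *m M) M.
Proof.
move=> x; split=> [MMx0 | ]; last by rewrite -mulmxA => ->; rewrite mulmx0.
apply: trmx_mul_self_eq0; rewrite trmx_mul -mulmxA (mulmxA M^T) MMx0.
by rewrite mulmx0 mxE.
Qed.

Lemma spsd_mulTmx p q (M : 'M[R]_(p, q)) : spsd_mx (M^T *m M).
Proof.
split=> [|x]; first by rewrite /symmetric_mx trmx_mul trmxK.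
by rewrite mulmxA -trmx_mul -mulmxA trmx_mul_self_ge0.
Qed.

Lemma spd_mulTmx p q (M : 'M[R]_(p, q)) : \rank M = q -> spd_mx (M^T *m M).
Proof.
move=> /full_col_rankP injM; split=> [|x x0]; first by case: (spsd_mulTmx M).
rewrite mulmxA -trmx_mul -mulmxA lt_def trmx_mul_self_ge0 andbT.
by apply: contra x0 => /eqP/trmx_mul_self_eq0/injM ->.
Qed.

Lemma spd_unitmx p (A : 'M[R]_p) : spd_mx A -> A \in unitmx.
Proof.
move=> [_ posA]; rewrite -row_free_unit; apply/eqP/full_col_rankP => x Ax0.
apply/eqP; apply: contraT => /posA.
by rewrite -mulmxA Ax0 mulmx0 mxE ltxx.
Qed.

Lemma quadratic_ge0_linear_eq0 (s c : R) :
  0 <= c -> (forall t, 0 <= 2 * t * s + t ^+ 2 * c) -> s = 0.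
Proof.
move=> c0 quad_ge0; have c1 : 0 < c + 1 by lra.
pose u := s / (c + 1); have su : s = u * (c + 1) by rewrite /u divfK // gt_eqF.
have := quad_ge0 (- u); rewrite su => h.
have u2 : u ^+ 2 <= 0 by nra.
suff -> : u = 0 by rewrite mul0r.
nra.
Qed.

Lemma spsd_quad_eq0 p (A : 'M[R]_p) (x : 'cV[R]_p) :
  spsd_mx A -> (x^T *m A *m x) 0 0 = 0 -> A *m x = 0.
Proof.
move=> [symA posA] xAx0; set y := A *m x.
have xAx : x^T *m A *m x = 0.
  by rewrite [LHS]mx11_scalar xAx0; apply/matrixP => i j; rewrite !ord1 !mxE.
have xAy : x^T *m A *m y = y^T *m y by rewrite /y -{1}symA -trmx_mul.
have yAx : y^T *m A *m x = y^T *m y by rewrite -mulmxA.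
have quadE t : (x + t *: y)^T *m A *m (x + t *: y)
    = (2 * t) *: (y^T *m y) + t ^+ 2 *: (y^T *m A *m y).
  rewrite [(x + t *: y)^T]linearD /= [(t *: y)^T]linearZ /=.
  rewrite !mulmxDl !mulmxDr -!scalemxAl -!scalemxAr xAx xAy yAx add0r.
  by rewrite scalerA -expr2 addrA -scalerDl; congr (_ *: _ + _); ring.
apply: trmx_mul_self_eq0; apply: (quadratic_ge0_linear_eq0 (posA y)) => t.
by have := posA (x + t *: y); rewrite quadE !mxE.
Qed.

Lemma spd_congr p (A E : 'M[R]_p) :
  spd_mx A -> E \in unitmx -> spd_mx (E^T *m A *m E).
Proof.
move=> [symA posA] uE; split; first by rewrite /symmetric_mx !trmx_mul trmxK symA mulmxA.
move=> x x0; rewrite -!mulmxA !mulmxA -trmx_mul -mulmxA; apply: posA.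
by apply: contra x0 => /eqP/(mulmx_unit_eq0 uE) ->.
Qed.

Lemma spd_block p1 p2 (a : 'M[R]_p1) b c (d : 'M[R]_p2) :
  spd_mx (block_mx a b c d) -> [/\ spd_mx a, spd_mx d & c = b^T].
Proof.
move=> [+ posA]; rewrite /symmetric_mx tr_block_mx => /eq_block_mx[syma bc cb symd].
split=> //; split=> // x x0.
  have := posA (col_mx x 0); rewrite col_mx_eq0 negb_and x0 => /(_ isT).
  by rewrite tr_col_mx trmx0 mul_row_block !mul0mx !addr0 mul_row_col mulmx0 addr0.
have := posA (col_mx 0 x); rewrite col_mx_eq0 negb_and x0 orbT => /(_ isT).
by rewrite tr_col_mx trmx0 mul_row_block !mul0mx !add0r mul_row_col mulmx0 add0r.
Qed.


Lemma schur_congr p (a : 'M[R]_1) (b : 'M[R]_(1, p)) (d : 'M[R]_p) :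
  a 0 0 != 0 ->
  let E := block_mx 1%:M (- ((a 0 0)^-1 *: b)) 0 1%:M in
  E^T *m block_mx a b b^T d *m E = block_mx a 0 0 (d - b^T *m ((a 0 0)^-1 *: b)).
Proof.
move=> a0 E; rewrite /E; set q := (a 0 0)^-1 *: b.
have aE : a = (a 0 0)%:M := mx11_scalar a.
have aq : a *m q = b.
  by rewrite -scalemxAr [in a *m b]aE mul_scalar_mx scalerA mulVf ?scale1r.
have qa : q^T *m a = b^T by rewrite -aq trmx_mul [in a^T]aE tr_scalar_mx -aE.
rewrite tr_block_mx !trmx1 trmx0 !mulmx_block !mul1mx !mulmx1 !mul0mx !mulmx0.
have qb : q^T *m b = b^T *m q by rewrite /q linearZ /= -scalemxAl -scalemxAr.
rewrite !addr0 !mulmxN aq addNr linearN /= !mulNmx qa addNr qb.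
by rewrite mul0mx oppr0 add0r addrC.
Qed.

Lemma cholesky p (A : 'M[R]_p) :
  spd_mx A -> exists2 Y : 'M[R]_p, Y \in unitmx & A = Y *m Y^T.
Proof.
elim: p A => [|p IHp] A spdA.
  by exists 1%:M; [exact: unitmx1 | apply/matrixP => -[]].
pose A' : 'M_(1 + p) := A.
set a := ulsubmx A'; set b := ursubmx A'; set d := drsubmx A'.
have spdA' : spd_mx (block_mx a b (dlsubmx A') d) by rewrite submxK.
have [[_ posa] _ cE] := spd_block spdA'; rewrite cE in spdA'.
have AE : A = block_mx a b b^T d by rewrite -cE submxK.
have a0 : 0 < a 0 0.
  have := posa 1%:M; rewrite trmx1 mul1mx mulmx1; apply.
  by apply/eqP => /matrixP/(_ 0 0); rewrite !mxE /= => /eqP; rewrite oner_eq0.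
set E : 'M_(1 + p) := block_mx 1%:M (- ((a 0 0)^-1 *: b)) 0 1%:M.
have uE : E \in unitmx by rewrite unitmxE det_ublock !det1 mulr1 unitr1.
have EAE : E^T *m block_mx a b b^T d *m E = _ := schur_congr b d (lt0r_neq0 a0).
have := spd_congr spdA' uE; rewrite EAE => /spd_block[_ spdS _].
have [Y1 uY1 SE] := IHp _ spdS.
pose F : 'M_(1 + p) := block_mx (Num.sqrt (a 0 0))%:M 0 0 Y1.
have uF : F \in unitmx.
  by rewrite unitmxE det_ublock det_scalar1 unitrM -unitmxE uY1 unitfE sqrtr_eq0 -ltNge a0.
have FF : F *m F^T = block_mx a 0 0 (d - b^T *m ((a 0 0)^-1 *: b)).
  rewrite tr_block_mx tr_scalar_mx !trmx0 mulmx_block !mulmx0 !mul0mx !addr0 add0r.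
  by rewrite -SE -scalar_mxM -expr2 sqr_sqrtr ?ltW // -mx11_scalar.
exists (invmx E^T *m F); first by rewrite unitmx_mul unitmx_inv unitmx_tr uE uF.
rewrite AE trmx_mul trmx_inv trmxK mulmxA -(mulmxA _ F) FF -EAE.
by rewrite !mulmxA mulVmx ?unitmx_tr // mul1mx mulmxK.
Qed.

Lemma orthonormalize n r (P : 'M[R]_(n, r)) :
  \rank P = r -> exists2 L : 'M[R]_r, L \in unitmx & (P *m L)^T *m (P *m L) = 1%:M.
Proof.
move=> /spd_mulTmx /cholesky [Y uY PPE].
exists (invmx Y^T); first by rewrite unitmx_inv unitmx_tr.
rewrite trmx_mul trmx_inv trmxK mulmxA -(mulmxA _ P^T) PPE.
by rewrite !mulmxA mulVmx // mul1mx mulmxV // unitmx_tr.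
Qed.

Lemma orthogonal_unitmx n (U : 'M[R]_n) : orthogonal_mx U -> U \in unitmx.
Proof. by case/mulmx1_unit. Qed.

Lemma orthogonal_trmx n (U : 'M[R]_n) : orthogonal_mx U -> orthogonal_mx U^T.
Proof. by rewrite /orthogonal_mx trmxK => /mulmx1C. Qed.

Lemma orthogonal_row_mx r k (P : 'M[R]_(r + k, r)) (K : 'M[R]_(r + k, k)) :
  P^T *m P = 1%:M -> K^T *m K = 1%:M -> P^T *m K = 0 -> orthogonal_mx (row_mx P K).
Proof.
move=> PP KK PK; apply: mulmx1C.
have KP : K^T *m P = 0 by rewrite -[P]trmxK -trmx_mul PK trmx0.
by rewrite tr_row_mx mul_col_row PP KK PK KP -scalar_mx_block.
Qed.


Lemma cols_basis_of_ker_mul0 p n k (N : 'M[R]_(n, k)) (A : 'M[R]_(p, n)) :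
  cols_basis_of_ker N A -> A *m N = 0.
Proof.
case=> _ kerN; apply: mulmx_cV_eq0 => y.
by rewrite -mulmxA; apply/(kerN _).2; exists y.
Qed.

Lemma cols_basis_of_ker_mulmx p n k (N : 'M[R]_(n, k)) (A : 'M[R]_(p, n)) (L : 'M[R]_k) :
  cols_basis_of_ker N A -> L \in unitmx -> cols_basis_of_ker (N *m L) A.
Proof.
move=> [rkN kerN] uL; split; first by rewrite mxrankMfree ?row_free_unit.
move=> x; rewrite kerN; split=> [[y ->] | [y ->]].
  by exists (invmx L *m y); rewrite -mulmxA mulKVmx.
by exists (L *m y); rewrite mulmxA.
Qed.

Lemma exists_cols_basis_of_ker p n k (A : 'M[R]_(p, n)) :
  k = (n - \rank A)%N -> exists N : 'M[R]_(n, k), cols_basis_of_ker N A.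
Proof.
move=> kE; have rkK : \rank (kermx A^T) = k by rewrite mxrank_ker mxrank_tr kE.
case: k / rkK {kE}; exists (row_base (kermx A^T))^T; split.
  by rewrite mxrank_tr; apply/eqP; exact: row_base_free.
move=> x; split=> [/mulmx_eq0_sub_kermx xK | [y ->]].
  have /submxP[D xE] : (x^T <= row_base (kermx A^T))%MS by rewrite eq_row_base.
  by exists D^T; rewrite -[x]trmxK xE trmx_mul.
apply/mulmx_eq0_sub_kermx; rewrite trmx_mul trmxK.
by apply: submx_trans (submxMl _ _) _; rewrite eq_row_base.
Qed.

Lemma exists_row_basis p n r (A : 'M[R]_(p, n)) :
  \rank A = r -> exists2 P : 'M[R]_(n, r), (P^T <= A)%MS & \rank P = r.
Proof.
move=> rkA; case: r / rkA; exists (row_base A)^T; first by rewrite trmxK eq_row_base.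
by rewrite mxrank_tr; apply/eqP; exact: row_base_free.
Qed.

Lemma exists_orthonormal_row_ker_basis n r k (B : 'M[R]_(n, r + k)) :
  \rank B = r ->
  exists (P : 'M[R]_(r + k, r)) (K : 'M[R]_(r + k, k)),
    [/\ orthogonal_mx (row_mx P K), P^T *m P = 1%:M, P^T *m K = 0
      & cols_basis_of_ker K B].
Proof.
move=> rkB; have [P0 /submxP[D P0E] rkP0] := exists_row_basis rkB.
have [K0 basisK0] : exists K0 : 'M_(r + k, k), cols_basis_of_ker K0 B.
  by apply: exists_cols_basis_of_ker; rewrite rkB addKn.
have [L1 uL1 PP] := orthonormalize rkP0.
have [L2 uL2 KK] := orthonormalize basisK0.1.
have PK : (P0 *m L1)^T *m (K0 *m L2) = 0.
  by rewrite trmx_mul P0E -!mulmxA (mulmxA B) (cols_basis_of_ker_mul0 basisK0) !mul0mx !mulmx0.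
exists (P0 *m L1), (K0 *m L2); split=> //; first exact: orthogonal_row_mx.
exact: cols_basis_of_ker_mulmx.
Qed.


Lemma balancerE n m (B : 'M[R]_(n, m)) (C : 'M[R]_(m, n)) (T : 'M[R]_n) :
  T \in unitmx -> (T *m B)^T = C *m invmx T <-> C = B^T *m (T^T *m T).
Proof.
move=> uT; split=> [TB | ->]; first by rewrite mulmxA -trmx_mul TB mulmxKV.
by rewrite trmx_mul !mulmxA mulmxK.
Qed.

Lemma balancer_cond n m (B : 'M[R]_(n, m)) (C : 'M[R]_(m, n)) (T : 'M[R]_n) :
  T \in unitmx -> (T *m B)^T = C *m invmx T ->
  [/\ same_kernel C^T B, \rank (C *m B) = \rank B & spsd_mx (C *m B)].
Proof.
move=> uT /(balancerE _ _ uT) ->.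
have uTT : T^T *m T \in unitmx by rewrite unitmx_mul unitmx_tr uT.
have CBE : B^T *m (T^T *m T) *m B = (T *m B)^T *m (T *m B).
  by rewrite trmx_mul !mulmxA.
split; last by rewrite CBE; apply: spsd_mulTmx.
  move=> x; rewrite !trmx_mul !trmxK -[_ *m x]mulmxA.
  by split=> [/(mulmx_unit_eq0 uTT) | ->]; rewrite ?mulmx0.
rewrite CBE (same_kernel_mxrank (same_kernel_mulTmx _)).
apply: same_kernel_mxrank => x; rewrite -mulmxA.
by split=> [/(mulmx_unit_eq0 uT) | ->]; rewrite ?mulmx0.
Qed.

Definition column_compression n r k (B : 'M[R]_(n, r + k)) (C : 'M[R]_(r + k, n))
    (V : 'M[R]_(r + k)) (B1 : 'M[R]_(n, r)) (C1 : 'M[R]_(r, n)) (Y : 'M[R]_r) : Prop :=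
  B *m V = row_mx B1 0 /\ C^T *m V = row_mx C1^T 0 /\
  \rank B1 = r /\ \rank C1^T = r /\
  Y \in unitmx /\ C1 *m B1 = Y *m Y^T /\ spd_mx (C1 *m B1).

Lemma cond_orthogonal_compression n r k (B : 'M[R]_(n, r + k)) (C : 'M[R]_(r + k, n)) :
  \rank B = r -> [/\ same_kernel C^T B, \rank (C *m B) = r & spsd_mx (C *m B)] ->
  exists (V : 'M[R]_(r + k)) (B1 : 'M[R]_(n, r)) (C1 : 'M[R]_(r, n)) (Y : 'M[R]_r),
    orthogonal_mx V /\ column_compression B C V B1 C1 Y.
Proof.
move=> rkB [kerC rkCB psdCB].
have [P [K [oV PP PK basisK]]] := exists_orthonormal_row_ker_basis rkB.
have BK : B *m K = 0 := cols_basis_of_ker_mul0 basisK.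
have CK : C^T *m K = 0.
  by apply: mulmx_cV_eq0 => y; rewrite -mulmxA; apply/(kerC _).2; rewrite mulmxA BK mul0mx.
have kerCB : forall x : 'cV_(r + k), C *m B *m x = 0 -> B *m x = 0.
  apply: ker_sub_eq_mxrank => [x Bx0 |]; last by rewrite rkB rkCB.
  by rewrite -mulmxA Bx0 mulmx0.
set B1 := B *m P; set C1 := (C^T *m P)^T.
have C1B1E : C1 *m B1 = P^T *m (C *m B) *m P by rewrite /C1 /B1 trmx_mul trmxK !mulmxA.
(* [P x] lies in the kernel of [B] only for [x = 0], since [P^T K = 0]. *)
have spdC1B1 : spd_mx (C1 *m B1).
  have [symCB posCB] := psdCB.
  split=> [|x x0].
    by rewrite C1B1E /symmetric_mx !trmx_mul trmxK -(trmx_mul C B) symCB !mulmxA.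
  have -> : x^T *m (C1 *m B1) *m x = (P *m x)^T *m (C *m B) *m (P *m x).
    by rewrite C1B1E trmx_mul !mulmxA.
  rewrite lt_def posCB andbT; apply/eqP => /(spsd_quad_eq0 psdCB)/kerCB.
  case/(basisK.2 _).1 => w Pxw; move/eqP: x0; apply.
  by rewrite -[x]mul1mx -PP -mulmxA Pxw mulmxA PK mul0mx.
have [Y uY C1B1Y] := cholesky spdC1B1.
have uC1B1 := spd_unitmx spdC1B1.
exists (row_mx P K), B1, C1, Y; split=> //.
split; first by rewrite mul_mx_row BK.
split; first by rewrite mul_mx_row CK trmxK.
split.
  apply/full_col_rankP => x B1x0; apply: (mulmx_unit_eq0 uC1B1).
  by rewrite -mulmxA B1x0 mulmx0.
split=> //; apply/full_col_rankP => x C1x0.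
apply: (mulmx_unit_eq0 (_ : (C1 *m B1)^T \in unitmx)); first by rewrite unitmx_tr.
by rewrite trmx_mul -mulmxA C1x0 mulmx0.
Qed.

Section Parametrization.
Variables (l r k : nat) (B : 'M[R]_(l + r, r + k)) (C : 'M[R]_(r + k, l + r)).
Variables (NB : 'M[R]_(l + r, l)) (V : 'M[R]_(r + k)).
Variables (B1 : 'M[R]_(l + r, r)) (C1 : 'M[R]_(r, l + r)) (Y : 'M[R]_r).
Hypotheses (basisNB : cols_basis_of_ker NB B^T) (uV : V \in unitmx).
Hypotheses (BV : B *m V = row_mx B1 0) (CV : C^T *m V = row_mx C1^T 0).
Hypotheses (uY : Y \in unitmx) (C1B1 : C1 *m B1 = Y *m Y^T).

Local Notation T0 := (col_mx NB^T (invmx Y *m C1)).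

Lemma compression_balanceE (G : 'M[R]_(l + r)) : C = B^T *m G <-> B1^T *m G = C1.
Proof.
have VC : V^T *m C = col_mx C1 0.
  by rewrite -[C]trmxK -trmx_mul CV tr_row_mx trmxK trmx0.
have VB : V^T *m B^T = col_mx B1^T 0 by rewrite -trmx_mul BV tr_row_mx trmx0.
have uVt : V^T \in unitmx by rewrite unitmx_tr.
split=> [CE | B1G].
  by move: VC; rewrite CE mulmxA VB mul_col_mx mul0mx => /eq_col_mx[].
apply: (can_inj (mulKmx uVt)).
by rewrite VC mulmxA VB mul_col_mx mul0mx B1G.
Qed.

Lemma trB1_NB : B1^T *m NB = 0.
Proof.
have B1E : B *m lsubmx V = B1 by rewrite mulmx_lsub BV row_mxKl.
by rewrite -B1E trmx_mul -mulmxA (cols_basis_of_ker_mul0 basisNB) mulmx0.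
Qed.

Lemma trNB_B1 : NB^T *m B1 = 0.
Proof. by apply: trmx_inj; rewrite trmx_mul trmxK trB1_NB trmx0. Qed.

Lemma trB1_trT0 : B1^T *m T0^T = row_mx 0 Y.
Proof.
rewrite tr_col_mx trmxK mul_mx_row trB1_NB trmx_mul mulmxA -trmx_mul C1B1 trmx_mul trmxK.
by rewrite trmx_inv -mulmxA mulmxV ?unitmx_tr // mulmx1.
Qed.

Lemma T0_gram_balance (W : 'M[R]_l) : B1^T *m (T0^T *m block_mx W 0 0 1%:M *m T0) = C1.
Proof.
rewrite !mulmxA trB1_trT0 mul_row_block !mul0mx !mulmx0 !add0r mulmx1.
by rewrite mul_row_col mul0mx add0r mulKVmx.
Qed.

Lemma T0_unitmx : T0 \in unitmx.
Proof.
have [rkNB _] := basisNB.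
have uNN : NB^T *m NB \in unitmx by apply/spd_unitmx/spd_mulTmx.
have : T0 *m row_mx NB B1 \in unitmx.
  rewrite mul_col_row trNB_B1 -[invmx Y *m C1 *m B1]mulmxA C1B1 mulKmx // unitmxE det_lblock.
  by rewrite unitrM -!unitmxE uNN unitmx_tr.
by rewrite unitmx_mul => /andP[].
Qed.

Lemma T0_congr (H : 'M[R]_(l + r)) :
  H^T = H -> H *m C1^T = B1 -> T0 *m H *m T0^T = block_mx (NB^T *m H *m NB) 0 0 1%:M.
Proof.
move=> symH HC1; have C1H : C1 *m H = B1^T by rewrite -HC1 trmx_mul trmxK symH.
have UR : NB^T *m H *m (C1^T *m (invmx Y)^T) = 0.
  by rewrite mulmxA -(mulmxA NB^T) HC1 trNB_B1 mul0mx.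
have DL : invmx Y *m C1 *m H *m NB = 0.
  by rewrite -(mulmxA (invmx Y)) C1H -mulmxA trB1_NB mulmx0.
have DR : invmx Y *m C1 *m H *m (C1^T *m (invmx Y)^T) = 1%:M.
  rewrite -(mulmxA (invmx Y)) C1H -!mulmxA (mulmxA B1^T) -trmx_mul C1B1.
  by rewrite trmx_mul trmxK trmx_inv !mulmxA mulVmx // mul1mx mulmxV ?unitmx_tr.
by rewrite tr_col_mx trmxK mul_col_mx mul_col_row trmx_mul UR DL DR.
Qed.

Lemma balancer_param (T : 'M[R]_(l + r)) :
  (T \in unitmx /\ (T *m B)^T = C *m invmx T) <->
  exists (U : 'M[R]_(l + r)) (Z : 'M[R]_l),
    orthogonal_mx U /\ Z \in unitmx /\ T = U *m block_mx Z 0 0 1%:M *m T0.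
Proof.
split=> [[uT /(balancerE _ _ uT)/compression_balanceE B1G] | [U [Z [oU [uZ ->]]]]].
  set H := invmx T *m (invmx T)^T.
  have HC1 : H *m C1^T = B1.
    rewrite -B1G !trmx_mul !trmxK /H trmx_inv !mulmxA mulmxKV ?unitmx_tr //.
    by rewrite mulVmx // mul1mx.
  have symH : H^T = H by rewrite /H trmx_mul trmxK.
  have spdW : spd_mx (NB^T *m H *m NB).
    have -> : NB^T *m H *m NB = ((invmx T)^T *m NB)^T *m ((invmx T)^T *m NB).
      by rewrite /H trmx_mul trmxK !mulmxA.
    have uTi : (invmx T)^T \in unitmx by rewrite unitmx_tr unitmx_inv.
    apply/spd_mulTmx/full_col_rankP => y; rewrite -mulmxA => /(mulmx_unit_eq0 uTi).
    by apply/(full_col_rankP NB).2; case: basisNB.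
  have [Y' uY' WE] := cholesky spdW.
  pose Z := invmx Y'; pose M := block_mx Z 0 0 1%:M *m T0 *m invmx T.
  have oM : orthogonal_mx M.
    rewrite /orthogonal_mx.
    have -> : M *m M^T = block_mx Z 0 0 1%:M *m (T0 *m H *m T0^T) *m (block_mx Z 0 0 1%:M)^T.
      by rewrite /M /H !trmx_mul !mulmxA.
    rewrite T0_congr // WE tr_block_mx !trmx0 trmx1 !mulmx_block !mulmx0 !mul0mx.
    rewrite !addr0 !add0r !mulmx1 /Z trmx_inv !mulmxA mulVmx // mul1mx mulmxV ?unitmx_tr //.
    by rewrite mul0mx -scalar_mx_block.
  exists M^T, Z; split; first exact: orthogonal_trmx.
  split; first by rewrite unitmx_inv.
  have MT : M *m T = block_mx Z 0 0 1%:M *m T0 by rewrite /M mulmxKV.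
  by rewrite -mulmxA -MT mulmxA (mulmx1C oM) mul1mx.
have uTZ : block_mx Z 0 0 (1%:M : 'M_r) \in unitmx.
  by rewrite unitmxE det_ublock det1 mulr1 -unitmxE.
have uT : U *m block_mx Z 0 0 1%:M *m T0 \in unitmx.
  by rewrite !unitmx_mul orthogonal_unitmx // uTZ T0_unitmx.
split=> //; apply/(balancerE _ _ uT)/compression_balanceE.
rewrite -[RHS](T0_gram_balance (Z^T *m Z)); congr (_ *m _).
have TZTZ : (block_mx Z 0 0 1%:M)^T *m block_mx Z 0 0 (1%:M : 'M_r)
    = block_mx (Z^T *m Z) 0 0 1%:M.
  by rewrite tr_block_mx !trmx0 trmx1 mulmx_block !mulmx0 !mul0mx !addr0 !add0r mulmx1.
by rewrite -TZTZ !trmx_mul !mulmxA -(mulmxA _ U^T) (mulmx1C oU) mulmx1.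
Qed.

Lemma T0_balancer : T0 \in unitmx /\ (T0 *m B)^T = C *m invmx T0.
Proof.
apply/balancer_param; exists 1%:M, 1%:M; split; first by rewrite /orthogonal_mx trmx1 mulmx1.
by split; [exact: unitmx1 | rewrite -scalar_mx_block !mul1mx].
Qed.

End Parametrization.

Lemma compression_balancer l r k (B : 'M[R]_(l + r, r + k)) (C : 'M[R]_(r + k, l + r))
    (V : 'M[R]_(r + k)) (B1 : 'M[R]_(l + r, r)) (C1 : 'M[R]_(r, l + r)) (Y : 'M[R]_r) :
  \rank B = r -> V \in unitmx -> column_compression B C V B1 C1 Y ->
  exists T : 'M[R]_(l + r), T \in unitmx /\ (T *m B)^T = C *m invmx T.
Proof.
move=> rkB uV [BV [CV [_ [_ [uY [C1B1 _]]]]]].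
have [NB basisNB] : exists NB : 'M[R]_(l + r, l), cols_basis_of_ker NB B^T.
  by apply: exists_cols_basis_of_ker; rewrite mxrank_tr rkB addnK.
by eexists; apply: T0_balancer basisNB uV BV CV uY C1B1.
Qed.

Lemma compression_cond l r k (B : 'M[R]_(l + r, r + k)) (C : 'M[R]_(r + k, l + r))
    (V : 'M[R]_(r + k)) (B1 : 'M[R]_(l + r, r)) (C1 : 'M[R]_(r, l + r)) (Y : 'M[R]_r) :
  \rank B = r -> V \in unitmx -> column_compression B C V B1 C1 Y ->
  [/\ same_kernel C^T B, \rank (C *m B) = r & spsd_mx (C *m B)].
Proof.
move=> rkB uV /(compression_balancer rkB uV) [T [uT /(balancer_cond uT) [kerC rkCB psdCB]]].
by rewrite rkCB rkB.
Qed.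

End RealMatrices.
Theorem lemma3p2 (R : rcfType) (n m r : nat)
  (B : 'M[R]_(n, m)) (C : 'M[R]_(m, n))
  (hrn : (r <= n)%N) (hrm : (r <= m)%N) (hr : \rank B = r) :
  (* (a), first equivalence *)
  ((exists T : 'M[R]_n, T \in unitmx /\ (T *m B)^T = C *m invmx T) <->
   [/\ same_kernel C^T B, \rank (C *m B) = r & spsd_mx (C *m B)])
  /\
  (* (a), second equivalence, with V invertible *)
  ([/\ same_kernel C^T B, \rank (C *m B) = r & spsd_mx (C *m B)] <->
   exists (V : 'M[R]_m) (B1 : 'M[R]_(n, r)) (C1 : 'M[R]_(r, n)) (Y : 'M[R]_r),
     (V \in unitmx /\
         B *m V = castmx (erefl n, subnKC hrm) (row_mx B1 0) /\
         C^T *m V = castmx (erefl n, subnKC hrm) (row_mx C1^T 0) /\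
         \rank B1 = r /\ \rank C1^T = r /\
         Y \in unitmx /\ C1 *m B1 = Y *m Y^T /\ spd_mx (C1 *m B1)))
  /\
  (* (a), second equivalence, with V orthogonal *)
  ([/\ same_kernel C^T B, \rank (C *m B) = r & spsd_mx (C *m B)] <->
   exists (V : 'M[R]_m) (B1 : 'M[R]_(n, r)) (C1 : 'M[R]_(r, n)) (Y : 'M[R]_r),
     (orthogonal_mx V /\
         B *m V = castmx (erefl n, subnKC hrm) (row_mx B1 0) /\
         C^T *m V = castmx (erefl n, subnKC hrm) (row_mx C1^T 0) /\
         \rank B1 = r /\ \rank C1^T = r /\
         Y \in unitmx /\ C1 *m B1 = Y *m Y^T /\ spd_mx (C1 *m B1)))
  /\
  (* (b) parametrization of all solutions *)
  (forall (NB : 'M[R]_(n, n - r)) (V : 'M[R]_m) (B1 : 'M[R]_(n, r))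
          (C1 : 'M[R]_(r, n)) (Y : 'M[R]_r),
     cols_basis_of_ker NB B^T ->
     V \in unitmx ->
     B *m V = castmx (erefl n, subnKC hrm) (row_mx B1 0) ->
     C^T *m V = castmx (erefl n, subnKC hrm) (row_mx C1^T 0) ->
     \rank B1 = r -> \rank C1^T = r ->
     Y \in unitmx -> C1 *m B1 = Y *m Y^T -> spd_mx (C1 *m B1) ->
     forall T : 'M[R]_n,
       (T \in unitmx /\ (T *m B)^T = C *m invmx T) <->
       exists (U : 'M[R]_n) (Z : 'M[R]_(n - r)),
         (orthogonal_mx U /\ Z \in unitmx /\
             T = U *m castmx (subnK hrn, subnK hrn)
                          (block_mx Z 0 0 (1%:M : 'M[R]_r))
                   *m castmx (subnK hrn, erefl n)
                          (col_mx NB^T (invmx Y *m C1)))).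
Proof.
generalize (subnKC hrm) (subnK hrn); generalize (m - r)%N (n - r)%N.
move=> k l ek el; subst m n.
have cond_compression := cond_orthogonal_compression hr.
split; [split | split; [split | split; [split | ]]].
- by case=> T [uT /(balancer_cond uT) [kerC rkCB psdCB]]; rewrite rkCB hr.
- case/cond_compression => V [B1 [C1 [Y [/orthogonal_unitmx uV VBC]]]].
  exact: compression_balancer hr uV VBC.
- case/cond_compression => V [B1 [C1 [Y [oV VBC]]]].
  by exists V, B1, C1, Y; split; first exact: orthogonal_unitmx.
- by case=> V [B1 [C1 [Y [uV VBC]]]]; apply: compression_cond hr uV VBC.
- exact: cond_compression.
- case=> V [B1 [C1 [Y [/orthogonal_unitmx uV VBC]]]].
  exact: compression_cond hr uV VBC.
move=> NB V B1 C1 Y basisNB uV BV CV _ _ uY C1B1 _ T.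
exact: balancer_param basisNB uV BV CV uY C1B1 T.
Qed.
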